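(* Let $N=2^\ell$ ($\ell$ a positive integer), $\omega=e^{2\pi\mathbf{i}/N}$, and let $C_2\subseteq C_1\subseteq\mathbb{F}_2^n$ be linear codes with bases $\beta_2\subseteq\beta_1$, respectively, and $Q=Q(C_1,C_2)$. Assume $\beta_1\setminus\beta_2=\{w_1,\ldots,w_K\}$, used as the encoding of $Q$, and let $b\in H_N$. For nonempty $J=\{j_1,\ldots,j_h\}\subseteq[K]$ define $$a_{J,b}=(-2)^{h-1}\, b\cdot(w_{j_1}\star\cdots\star w_{j_h})\bmod N.$$ Then the logical action of $U(b)$ is $$\overline{U(b)}=\prod_{h=1}^K\ \prod_{\substack{J\subseteq[K]\\ |J|=h}} C_J\text{-}U(a_{J,b}).$$
   Context: Vectors of $\mathbb{F}_2^n$ are lifted to $\{0,1\}^n\subseteq\mathbb{Z}_N^n$, $\star$ is the componentwise product, and $b\cdot x=\sum_ib_ix_i\bmod N$. $U(a)=\mathrm{diag}(1,\omega^a)$, $U(b)=\bigotimes_iU(b_i)$. $Q(C_1,C_2)$ is the subspace of $(\mathbb{C}^2)^{\otimes n}$ stabilized by all $X(u)Z(v)$, $u\in C_2$, $v\in C_1^\perp$; $H_N=\{b\in\mathbb{Z}_N^n:U(b)Q=Q\}$. The logical states are $|v\rangle_L=|C_2|^{-1/2}\sum_{u\in C_2}|u+\sum_iv_iw_i\rangle$ for $v\in\mathbb{F}_2^K$, and the logical action of $U$ with $UQ=Q$ is $\mathcal{E}^{-1}U\mathcal{E}$ on $(\mathbb{C}^2)^{\otimes K}$ with $\mathcal{E}:|v\rangle\mapsto|v\rangle_L$.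 For $v\in\mathbb{F}_2^K$ and $J\subseteq[K]$, $v_J=\prod_{i\in J}v_i$, and for $a\in\mathbb{Z}_N$ the controlled gate on $(\mathbb{C}^2)^{\otimes K}$ is $C_J\text{-}U(a)=\sum_{v:\,v_J=0}|v\rangle\langle v|+\omega^a\sum_{v:\,v_J=1}|v\rangle\langle v|$. *)

From HB Require Import structures.
From mathcomp Require Import all_boot all_order all_algebra all_field.
From mathcomp Require Import reals trigo.
From mathcomp Require Import complex.

Set Implicit Arguments.
Unset Strict Implicit.
Unset Printing Implicit Defensive.

Import Order.TTheory GRing.Theory Num.Theory.
Local Open Scope ring_scope.
Local Open Scope complex_scope.

Section QDefs.
Variable R : realType.
Local Notation C := (R[i]).

Definition omega (N : nat) : C :=
  Complex (cos (2 * pi / N%:R)) (sin (2 * pi / N%:R)).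

Definition omega_pow (N : nat) (a : 'Z_N) : C := omega N ^+ (nat_of_ord a).

(* vectors of F_2^n are row vectors 'rV['F_2]_n;
   lifting F_2^n -> {0,1}^n \subseteq Z_N^n *)
Definition lift (N n : nat) (x : 'rV['F_2]_n) : 'rV['Z_N]_n :=
  \row_i (nat_of_ord (x ord0 i))%:R.

Definition star (N n : nat) (x y : 'rV['Z_N]_n) : 'rV['Z_N]_n :=
  \row_i (x ord0 i * y ord0 i).

Definition dotN (N n : nat) (b x : 'rV['Z_N]_n) : 'Z_N :=
  \sum_i b ord0 i * x ord0 i.

Definition dot2 (n : nat) (x y : 'rV['F_2]_n) : 'F_2 :=
  \sum_i x ord0 i * y ord0 i.

Definition dual (n : nat) (C1 : {vspace 'rV['F_2]_n}) : pred 'rV['F_2]_n :=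
  fun v => [forall c, (c \in C1) ==> (dot2 v c == 0)].

(* state space (C^2)^{\otimes n}: functions from computational basis
   labels F_2^n to C; operators are maps on this space *)
Definition state (m : nat) := 'rV['F_2]_m -> C.

(* X(u) |x> = |x + u>, so (X(u) psi)(x) = psi(x + u) *)
Definition Xop (n : nat) (u : 'rV['F_2]_n) (psi : state n) : state n :=
  fun x => psi (x + u).

Definition Zop (n : nat) (v : 'rV['F_2]_n) (psi : state n) : state n :=
  fun x => (if dot2 v x == 1 then -1 else 1) * psi x.

(* U(a) = diag(1, omega^a);  U(b) = \bigotimes_i U(b_i) *)
Definition Uop (N n : nat) (b : 'rV['Z_N]_n) (psi : state n) : state n :=
  fun x => (\prod_i (if x ord0 i == 1 then omega_pow (b ord0 i) else 1)) * psi x.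

Definition Qcode (n : nat) (C1 C2 : {vspace 'rV['F_2]_n}) : state n -> Prop :=
  fun psi => forall u v, u \in C2 -> dual C1 v -> Xop u (Zop v psi) = psi.

Definition H_N (N n : nat) (C1 C2 : {vspace 'rV['F_2]_n}) (b : 'rV['Z_N]_n) : Prop :=
  forall psi, Qcode C1 C2 psi <-> exists2 phi, Qcode C1 C2 phi & psi = Uop b phi.

Definition logical_state (n K : nat) (C2 : {vspace 'rV['F_2]_n})
    (w : 'I_K -> 'rV['F_2]_n) (v : 'rV['F_2]_K) : state n :=
  fun x => (sqrtC (#|[pred u : 'rV['F_2]_n | u \in C2]|%:R : C))^-1 *
           \sum_(u : 'rV['F_2]_n | u \in C2)
              (if x == u + \sum_i v ord0 i *: w i then 1 else 0).

Definition encode (n K : nat) (C2 : {vspace 'rV['F_2]_n})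
    (w : 'I_K -> 'rV['F_2]_n) (phi : state K) : state n :=
  fun x => \sum_(v : 'rV['F_2]_K) phi v * logical_state C2 w v x.

(* L is the logical action of U, i.e. L = E^{-1} U E, expressed as U o E = E o L
   (E is injective with image Q) *)
Definition is_logical_action (n K : nat) (C2 : {vspace 'rV['F_2]_n})
    (w : 'I_K -> 'rV['F_2]_n) (U : state n -> state n) (L : state K -> state K) :=
  forall phi, U (encode C2 w phi) = encode C2 w (L phi).

Definition vJ (K : nat) (J : {set 'I_K}) (v : 'rV['F_2]_K) : 'F_2 :=
  \prod_(i in J) v ord0 i.

Definition CU (N K : nat) (J : {set 'I_K}) (a : 'Z_N) (phi : state K) : state K :=
  fun v => (if vJ J v == 1 then omega_pow a else 1) * phi v.

Definition aJb (N n K : nat) (w : 'I_K -> 'rV['F_2]_n) (b : 'rV['Z_N]_n)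
    (J : {set 'I_K}) : 'Z_N :=
  (- 2) ^+ (#|J|.-1) *
  dotN b (\big[@star N n/const_mx 1]_(j in J) lift N (w j)).

Definition prod_ops (m : nat) (s : seq (state m -> state m)) : state m -> state m :=
  foldr (fun A B => A \o B) id s.

Definition logical_gate (N n K : nat) (w : 'I_K -> 'rV['F_2]_n) (b : 'rV['Z_N]_n)
    : state K -> state K :=
  prod_ops (flatten [seq [seq CU J (aJb w b J) | J <- enum [set J : {set 'I_K} | #|J| == h]]
                    | h <- iota 1 K]).

End QDefs.

From Pilot Require Import Defs.
From HB Require Import structures.
From mathcomp Require Import all_boot all_order all_algebra all_field.
From mathcomp Require Import reals trigo.
From mathcomp Require Import complex.
From mathcomp Require Import ring.
From mathcomp Require Import boolp.

(* U(b) is diagonal, multiplying |x> by omega^(b . x).  For the codeword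
   z_v = sum_i v_i w_i, the lift of an F_2-sum to Z_N is given by
   inclusion-exclusion, [x_1 + ... + x_K] = sum_(J <> 0) (-2)^(|J|-1) prod_(j in J) x_j,
   so omega^(b . z_v) = prod_J [v_J = 1] omega^(a_(J,b)), the phase by which the
   diagonal gate prod_J C_J-U(a_(J,b)) multiplies |v>.  It remains to see that
   omega^(b . x) = omega^(b . z_v) on the coset z_v + C2 supporting |v>_L: the
   indicator of that coset is a code state, so by b in H_N it equals U(b) phi for
   a code state phi, and phi is invariant under translations by C2. *)

Set Implicit Arguments.
Unset Strict Implicit.
Unset Printing Implicit Defensive.

Import Order.TTheory GRing.Theory Num.Theory.
Local Open Scope ring_scope.

Section Omega.
Variable R : realType.

Lemma omega_exprE (N k : nat) :
  omega R N ^+ k = Complex (cos ((2 * pi / N%:R) *+ k)) (sin ((2 * pi / N%:R) *+ k)).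
Proof.
elim: k => [|k IHk]; first by rewrite expr0 !mulr0n cos0 sin0.
rewrite exprSr IHk /omega (mulrSr (2 * pi / N%:R)) cosD sinD /=.
by congr Complex; ring.
Qed.

Lemma omega_exprn (N : nat) : (0 < N)%N -> omega R N ^+ N = 1.
Proof.
move=> N_gt0; rewrite omega_exprE -mulr_natr mulfVK ?pnatr_eq0 -?lt0n //.
by rewrite mulr_natl cos2pi sin2pi.
Qed.

Variable N : nat.
Hypothesis N_gt1 : (1 < N)%N.

Lemma omega_pow0 : omega_pow R (0 : 'Z_N) = 1.
Proof. exact: expr0. Qed.

Lemma omega_powD (a c : 'Z_N) :
  omega_pow R (a + c) = omega_pow R a * omega_pow R c.
Proof.
rewrite /omega_pow -exprD /=; move: (a + c)%N => m.
by rewrite Zp_cast // expr_mod // omega_exprn // ltnW.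
Qed.

Lemma omega_pow_sum (I : Type) (r : seq I) (P : pred I) (F : I -> 'Z_N) :
  omega_pow R (\sum_(i <- r | P i) F i) = \prod_(i <- r | P i) omega_pow R (F i).
Proof. exact: (big_morph _ omega_powD omega_pow0). Qed.

Lemma Uop_dotN n (b : 'rV['Z_N]_n) (psi : state R n) x :
  Uop b psi x = omega_pow R (dotN b (Defs.lift N x)) * psi x.
Proof.
rewrite /Uop /dotN omega_pow_sum; congr (_ * _); apply: eq_bigr => i _.
by rewrite mxE; case: (x ord0 i) => [[|[|]]] //= _; rewrite ?mulr0 ?mulr1.
Qed.

End Omega.

Lemma F2_cases (x : 'F_2) : x = 0 \/ x = 1.
Proof. by case: x => [[|[|]] //] x_lt2; [left | right]; apply: val_inj. Qed.

Lemma F2_val1 : nat_of_ord (1 : 'F_2) = 1%N.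
Proof. by []. Qed.

Lemma natr_F2M (Rg : pzSemiRingType) (x y : 'F_2) :
  (nat_of_ord (x * y))%:R = (nat_of_ord x)%:R * (nat_of_ord y)%:R :> Rg.
Proof. by case: (F2_cases x) => ->; case: (F2_cases y) => ->; rewrite ?mul0r ?mulr0 ?mulr1. Qed.

Lemma natr_F2_prod (Rg : pzSemiRingType) (I : Type) (r : seq I) (P : pred I) (F : I -> 'F_2) :
  (nat_of_ord (\prod_(i <- r | P i) F i))%:R = \prod_(i <- r | P i) (nat_of_ord (F i))%:R :> Rg.
Proof. exact: (big_morph (fun x : 'F_2 => (nat_of_ord x)%:R : Rg) (@natr_F2M Rg)). Qed.

Lemma sign_F2_sum (Rg : comPzRingType) (I : finType) (a : I -> 'F_2) :
  1 - 2 * (nat_of_ord (\sum_i a i))%:R = \prod_i (1 - 2 * (nat_of_ord (a i))%:R) :> Rg.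
Proof.
apply: (big_rec2 (fun (s : 'F_2) (p : Rg) => 1 - 2 * (nat_of_ord s)%:R = p)).
  by rewrite mulr0 subr0.
move=> i s _ _ <-.
have F2_1add1 : 1 + 1 = 0 :> 'F_2 by apply: val_inj.
case: (F2_cases (a i)) => ->; case: (F2_cases s) => ->;
  rewrite ?F2_1add1 ?addr0 ?add0r ?F2_val1 /=; ring.
Qed.

Lemma int_F2_sum (I : finType) (a : I -> 'F_2) :
  (nat_of_ord (\sum_i a i))%:R =
  \sum_(J : {set I} | J != set0) (-2) ^+ #|J|.-1 * \prod_(j in J) (nat_of_ord (a j))%:R :> int.
Proof.
set X := fun J : {set I} => \prod_(j in J) (nat_of_ord (a j))%:R : int.
have expand : \prod_i (1 - 2 * (nat_of_ord (a i))%:R) = \sum_(J : {set I}) (-2) ^+ #|J| * X J.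
  under eq_bigr => i _ do rewrite addrC -mulNr.
  rewrite (bigA_distr 1 +%R (fun i => -2 * (nat_of_ord (a i))%:R) (fun=> 1)).
  apply: eq_bigr => J _.
  by rewrite -big_mkcond /= big_split /= prodr_const.
(* Expand 1 - 2 [sum a] = prod (1 - 2 a_i) over subsets, then cancel 1 and -2 in int. *)
apply: (@mulfI _ (-2)) => //; rewrite big_distrr /=.
rewrite (eq_bigr (fun J : {set I} => (-2) ^+ #|J| * X J)); last first.
  by move=> J J_neq0; rewrite mulrA -exprS prednK // card_gt0.
apply: (addrI 1); rewrite mulNr sign_F2_sum expand (bigD1 set0) //=.
by rewrite cards0 expr0 mul1r /X big_set0.
Qed.

Lemma natr_F2_sum (Rg : comPzRingType) (I : finType) (a : I -> 'F_2) :
  (nat_of_ord (\sum_i a i))%:R =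
  \sum_(J : {set I} | J != set0) (-2) ^+ #|J|.-1 * \prod_(j in J) (nat_of_ord (a j))%:R :> Rg.
Proof.
have /(congr1 (intmul (1 : Rg))) := int_F2_sum a.
rewrite rmorph_nat rmorph_sum => ->; apply: eq_bigr => J _.
by rewrite rmorphM rmorphXn rmorphN rmorph_nat rmorph_prod; under eq_bigr do rewrite rmorph_nat.
Qed.

Section Lift.
Variables N n : nat.

Lemma star_prodE (I : Type) (r : seq I) (P : pred I) (F : I -> 'rV['Z_N]_n) c :
  (\big[@star N n/const_mx 1]_(i <- r | P i) F i) ord0 c = \prod_(i <- r | P i) F i ord0 c.
Proof. by apply: (big_morph (fun M : 'rV_n => M ord0 c)) => [x y|]; rewrite mxE. Qed.

Lemma lift_sum (I : finType) (x : I -> 'rV['F_2]_n) :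
  Defs.lift N (\sum_i x i) =
  \sum_(J : {set I} | J != set0)
    (-2) ^+ #|J|.-1 *: \big[@star N n/const_mx 1]_(j in J) Defs.lift N (x j).
Proof.
apply/rowP => c; rewrite !(mxE, summxE) natr_F2_sum; apply: eq_bigr => J _.
rewrite mxE star_prodE; congr (_ * _).
by apply: eq_bigr => j _; rewrite mxE.
Qed.

Lemma dotN_sum (I : Type) (r : seq I) (P : pred I) (b : 'rV['Z_N]_n) (y : I -> 'rV_n) :
  dotN b (\sum_(i <- r | P i) y i) = \sum_(i <- r | P i) dotN b (y i).
Proof.
rewrite /dotN exchange_big; apply: eq_bigr => c _.
by rewrite summxE big_distrr.
Qed.

Lemma dotNZ (b : 'rV['Z_N]_n) (k : 'Z_N) (y : 'rV_n) : dotN b (k *: y) = k * dotN b y.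
Proof. by rewrite /dotN big_distrr; apply: eq_bigr => c _; rewrite mxE mulrCA. Qed.

End Lift.

Definition codeword (n K : nat) (w : 'I_K -> 'rV['F_2]_n) (v : 'rV['F_2]_K) : 'rV['F_2]_n :=
  \sum_i v ord0 i *: w i.

Lemma dotN_lift_codeword (N n K : nat) (w : 'I_K -> 'rV['F_2]_n) (b : 'rV['Z_N]_n) v :
  dotN b (Defs.lift N (codeword w v)) =
  \sum_(J : {set 'I_K} | J != set0) (if vJ J v == 1 then aJb w b J else 0).
Proof.
rewrite /codeword lift_sum dotN_sum; apply: eq_bigr => J _.
have lift_starZ : \big[@star N n/const_mx 1]_(j in J) Defs.lift N (v ord0 j *: w j) =
    (nat_of_ord (vJ J v))%:R *: \big[@star N n/const_mx 1]_(j in J) Defs.lift N (w j).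
  apply/rowP => c; rewrite mxE !star_prodE /vJ natr_F2_prod -big_split.
  by apply: eq_bigr => j _; rewrite !mxE natr_F2M.
rewrite dotNZ lift_starZ dotNZ /aJb.
by case: (F2_cases (vJ J v)) => ->; rewrite ?F2_val1 ?mul0r ?mulr0 ?mul1r.
Qed.

Lemma big_sets_by_card (T : Type) (idx : T) (op : Monoid.com_law idx) (K : nat)
    (F : {set 'I_K} -> T) :
  \big[op/idx]_(J <- flatten [seq enum [set J : {set 'I_K} | #|J| == h] | h <- iota 1 K]) F J =
  \big[op/idx]_(J : {set 'I_K} | J != set0) F J.
Proof.
rewrite big_flatten /= big_map (_ : iota 1 K = index_iota 1 K.+1); last first.
  by rewrite /index_iota subn1.
under eq_bigr => h _ do rewrite big_enum /= big_mkcond.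
rewrite exchange_big [RHS]big_mkcond; apply: eq_bigr => J _.
under eq_bigr => h _ do rewrite inE eq_sym.
rewrite -big_mkcond big_nat1_eq card_gt0 ltnS.
by have := max_card J; rewrite card_ord => ->; rewrite andbT.
Qed.

Section Gate.
Variable R : realType.

Lemma prod_ops_diag (m : nat) (I : Type) (s : seq I) (A : I -> state R m -> state R m)
    (g : I -> 'rV['F_2]_m -> R[i]) :
  (forall i phi v, A i phi v = g i v * phi v) ->
  forall phi v, prod_ops [seq A i | i <- s] phi v = (\prod_(i <- s) g i v) * phi v.
Proof.
move=> A_diag phi v; elim: s => [|i s IHs] /=; first by rewrite big_nil mul1r.
by rewrite A_diag IHs big_cons mulrA.
Qed.

Lemma logical_gateE (N n K : nat) (w : 'I_K -> 'rV['F_2]_n) (b : 'rV['Z_N]_n) phi v :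
  (1 < N)%N ->
  logical_gate w b phi v = omega_pow R (dotN b (Defs.lift N (codeword w v))) * phi v.
Proof.
move=> N_gt1; rewrite /logical_gate.
rewrite (_ : flatten _ = [seq CU J (aJb w b J) | J <- flatten
    [seq enum [set J : {set 'I_K} | #|J| == h] | h <- iota 1 K]]); last first.
  by rewrite map_flatten -map_comp.
rewrite (@prod_ops_diag K _ _ _
  (fun J v => if vJ J v == 1 then omega_pow R (aJb w b J) else 1)) //.
rewrite big_sets_by_card dotN_lift_codeword omega_pow_sum //; congr (_ * _).
by apply: eq_bigr => J _; case: ifP; rewrite ?omega_pow0.
Qed.

End Gate.

Section Code.
Variable R : realType.
Variables N n : nat.
Hypothesis N_gt1 : (1 < N)%N.
Variables C1 C2 : {vspace 'rV['F_2]_n}.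
Hypothesis C2_sub_C1 : (C2 <= C1)%VS.

Lemma dual0 : dual C1 0.
Proof.
by apply/forallP => c; apply/implyP => _; rewrite /dot2 big1 // => i _; rewrite mxE mul0r.
Qed.

Lemma Qcode_translate (psi : state R n) u y :
  Qcode C1 C2 psi -> u \in C2 -> psi (y + u) = psi y.
Proof.
move=> Qpsi uC2; have /(congr1 (fun f => f y)) := Qpsi u 0 uC2 dual0.
by rewrite /Xop /Zop /dot2 big1 ?mul1r // => i _; rewrite mxE mul0r.
Qed.

Lemma Qcode_coset_indicator z :
  z \in C1 -> Qcode C1 C2 (fun y => if y - z \in C2 then 1 else 0 : R[i]).
Proof.
move=> zC1 u v uC2 v_dual; apply: funext => y; rewrite /Xop /Zop.
have -> : (y + u - z \in C2) = (y - z \in C2) by rewrite addrAC (rpredDr _ uC2).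
have [yzC2|_] := boolP (y - z \in C2); last by rewrite mulr0.
have yuC1 : y + u \in C1.
  have sub := subvP C2_sub_C1.
  by rewrite -(subrK z y) -addrA; apply: rpredD; [exact: sub | exact: rpredD zC1 (sub _ uC2)].
by move: v_dual => /forallP /(_ (y + u)) /implyP /(_ yuC1) /eqP ->; rewrite mulr1.
Qed.

Lemma H_N_phase_coset (b : 'rV['Z_N]_n) z x :
  H_N R C1 C2 b -> z \in C1 -> x - z \in C2 ->
  omega_pow R (dotN b (Defs.lift N x)) = omega_pow R (dotN b (Defs.lift N z)).
Proof.
move=> bH zC1 xzC2.
have [phi Qphi Uphi] := proj1 (bH _) (Qcode_coset_indicator zC1).
have phi_xz : phi x = phi z by rewrite -[x](subrK z) addrC (Qcode_translate z Qphi xzC2).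
have /(congr1 (fun f => f z)) := Uphi; have /(congr1 (fun f => f x)) := Uphi.
rewrite !Uop_dotN // subrr rpred0 xzC2 phi_xz => Ux Uz.
have phiz_neq0 : phi z != 0.
  by apply: contra_eq_neq Uz => ->; rewrite mulr0 oner_neq0.
by apply: (mulIf phiz_neq0); rewrite -Ux -Uz.
Qed.

Variables (K : nat) (w : 'I_K -> 'rV['F_2]_n) (b : 'rV['Z_N]_n).
Hypotheses (w_in_C1 : forall j, w j \in C1) (bH : H_N R C1 C2 b).

Lemma Uop_logical_state v :
  Uop b (logical_state R C2 w v) =
  (fun x => omega_pow R (dotN b (Defs.lift N (codeword w v))) * logical_state R C2 w v x).
Proof.
apply: funext => x; rewrite Uop_dotN //.
have [xzC2|xz_notC2] := boolP (x - codeword w v \in C2).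
  by rewrite (H_N_phase_coset bH _ xzC2) // rpred_sum // => i _; rewrite rpredZ.
rewrite /logical_state big1 ?mulr0 // => u uC2; case: eqP => // xE.
by move: xz_notC2; rewrite xE addrK uC2.
Qed.

Lemma Uop_encode (phi : state R K) :
  Uop b (encode C2 w phi) =
  encode C2 w (fun v => omega_pow R (dotN b (Defs.lift N (codeword w v))) * phi v).
Proof.
apply: funext => x; rewrite Uop_dotN // /encode big_distrr /=; apply: eq_bigr => v _.
by rewrite mulrCA -[in LHS](Uop_dotN N_gt1) Uop_logical_state mulrCA mulrA.
Qed.

End Code.

Unset Implicit Arguments.

Theorem proposition3p13 (R : realType) (l n k2 K : nat) (hl : (0 < l)%N)
    (C1 C2 : {vspace 'rV['F_2]_n})
    (beta2 : k2.-tuple 'rV['F_2]_n) (w : K.-tuple 'rV['F_2]_n)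
    (hb1 : basis_of C1 (beta2 ++ w)) (hb2 : basis_of C2 beta2)
    (b : 'rV['Z_(2 ^ l)]_n) (hbH : H_N R C1 C2 b) :
  is_logical_action C2 (fun j => tnth w j) (Uop (R := R) b)
    (logical_gate (R := R) (fun j => tnth w j) b).
Proof.
have N_gt1 : (1 < 2 ^ l)%N by rewrite -{1}(expn0 2) ltn_exp2l.
move: (hb1) (hb2) => /andP[/eqP C1E _] /andP[/eqP C2E _].
have C2_sub_C1 : (C2 <= C1)%VS by rewrite -C1E -C2E span_cat addvSl.
have w_in_C1 j : tnth w j \in C1 by rewrite -C1E memv_span // mem_cat mem_tnth orbT.
move=> phi; rewrite (Uop_encode N_gt1 C2_sub_C1 w_in_C1 hbH); congr encode.
by apply: funext => v; rewrite logical_gateE.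
Qed.
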